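(* Let $\mathcal{T}$ be an $l$-eligible multiset of tuples partitioned into multisets $Q_1,\dots,Q_s,R$. Suppose every $Q_i$ is dead and $R$ is not $l$-eligible. Then for every pillar $p$ of $R$ there exists some $i$ such that $p$ is not a conflicting pillar of $Q_i$.
   Context: Each tuple has a sensitive attribute (SA) value. For a multiset $Q$ and SA value $v$, $h(Q,v)$ is the number of tuples in $Q$ with SA value $v$, $h(Q)=\max_v h(Q,v)$, and the pillars of $Q$ are the SA values $v$ with $h(Q,v)=h(Q)$. $Q$ is $l$-eligible if $|Q|\ge l\cdot h(Q)$. A multiset $Q_i$ is thin if $|Q_i|=l\cdot h(Q_i)$; it is conflicting if at least one of its pillars is also a pillar of $R$ (such pillars are its conflicting pillars); it is dead if it is both thin and conflicting. *)

From mathcomp Require Import all_boot.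
Set Implicit Arguments. Unset Strict Implicit. Unset Printing Implicit Defensive.

(* Tuples have type [Tup]; [sa : Tup -> V] gives the sensitive attribute.
   A multiset of tuples is a [seq Tup] (order irrelevant). *)
Section Defs.
Variables (Tup V : eqType) (sa : Tup -> V).

Definition hv (Q : seq Tup) (v : V) : nat := count (fun t => sa t == v) Q.

(* h(Q) = max_v h(Q,v); only values occurring in Q can contribute,
   and the max is 0 for empty Q. *)
Definition h (Q : seq Tup) : nat := \max_(t <- Q) hv Q (sa t).

Definition pillar (Q : seq Tup) (v : V) : Prop := hv Q v = h Q.

Definition eligible (l : nat) (Q : seq Tup) : Prop := l * h Q <= size Q.

Definition thin (l : nat) (Q : seq Tup) : Prop := size Q = l * h Q.

Definition conflicting_pillar (Q R : seq Tup) (v : V) : Prop :=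
  pillar Q v /\ pillar R v.

Definition conflicting (Q R : seq Tup) : Prop :=
  exists v, conflicting_pillar Q R v.

Definition dead (l : nat) (Q R : seq Tup) : Prop := thin l Q /\ conflicting Q R.
End Defs.

From mathcomp Require Import all_boot.
From mathcomp Require Import zify.

Set Implicit Arguments.
Unset Strict Implicit.
Unset Printing Implicit Defensive.

(* If p were a pillar of every Q_i, each thin Q_i would satisfy |Q_i| = l h(Q_i,p), and
   so would their union F. Since R is not eligible and p is a pillar of R,
   |R| < l h(R,p). Adding up, |T| < l h(T,p) <= l h(T), contradicting the eligibility
   of T. *)

Section Pillars.
Variables (Tup V : eqType) (sa : Tup -> V).

Lemma hv_cat (Q1 Q2 : seq Tup) (v : V) : hv sa (Q1 ++ Q2) v = hv sa Q1 v + hv sa Q2 v.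
Proof. exact: count_cat. Qed.

Lemma hv_perm (Q1 Q2 : seq Tup) (v : V) : perm_eq Q1 Q2 -> hv sa Q1 v = hv sa Q2 v.
Proof. by move/permP; apply. Qed.

Lemma hv_leq_h (Q : seq Tup) (v : V) : hv sa Q v <= h sa Q.
Proof.
have [/hasP [t tQ /eqP <-] | noV] := boolP (has (fun t => sa t == v) Q).
  exact: (@leq_bigmax_seq _ _ xpredT (fun u => hv sa Q (sa u)) t tQ isT).
by move: noV; rewrite has_count -leqNgt leqn0 => /eqP; rewrite /hv => ->.
Qed.

Lemma eligible_hv (l : nat) (Q : seq Tup) (v : V) :
  eligible sa l Q -> l * hv sa Q v <= size Q.
Proof. exact/leq_trans/leq_mul/hv_leq_h. Qed.

Lemma size_flatten_thin_pillar (l : nat) (p : V) (L : seq (seq Tup)) :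
  (forall q, q \in L -> thin sa l q /\ pillar sa q p) ->
  size (flatten L) = l * hv sa (flatten L) p.
Proof.
elim: L => [|q L IHL] thinL /=; first by rewrite muln0.
have [thin_q pillar_q] := thinL q (mem_head q L).
rewrite size_cat hv_cat mulnDr thin_q pillar_q IHL // => q' q'L.
by apply: thinL; rewrite in_cons q'L orbT.
Qed.

End Pillars.

Theorem lemma7 (Tup V : eqType) (sa : Tup -> V) (l s : nat)
  (T : seq Tup) (Q : 'I_s -> seq Tup) (R : seq Tup) :
  eligible sa l T ->
  perm_eq T (flatten [seq Q i | i <- enum 'I_s] ++ R) ->
  (forall i : 'I_s, dead sa l (Q i) R) ->
  ~ eligible sa l R ->
  forall p : V, pillar sa R p ->
  exists i : 'I_s, ~ conflicting_pillar sa (Q i) R p.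
Proof.
move=> eligT permT deadQ nonelR p pillarR.
case: (pickP (fun i => hv sa (Q i) p != h sa (Q i))) => [i /eqP notpil | allpil].
  by exists i => -[].
exfalso; set F := flatten _ in permT.
have sizeF : size F = l * hv sa F p.
  apply: size_flatten_thin_pillar => _ /mapP [i _ ->].
  by split; [case: (deadQ i) | apply/eqP; rewrite -[_ == _]negbK allpil].
have sizeR : size R < l * hv sa R p by rewrite pillarR ltnNge; apply/negP.
have := eligible_hv p eligT.
by rewrite (hv_perm sa p permT) (perm_size permT) hv_cat size_cat sizeF; lia.
Qed.
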